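(* Assume (A1)–(A2) and $N\geq \max\{1,\|f\|_\infty/2\}$. Then the semi-discrete policy iteration process described in the context is well-defined, that is, there are Lipschitz continuous functions $v_n^h,\alpha_n$ satisfying its equations for all $n\ge0$, and the functions $v_n^h$ are uniformly bounded for all $n\geq 0$ and $h>0$.
   Context: Let $d,m\ge1$, $T\ge 1$, $A\subset\mathbb{R}^m$ compact, $c:[0,T]\times\mathbb{R}^d\times A\to\mathbb{R}$, $f:[0,T]\times\mathbb{R}^d\times A\to\mathbb{R}^d$, $q:\mathbb{R}^d\to\mathbb{R}$. Let $\alpha(t,x,p)=\operatorname{argmin}_{a\in A}[c(t,x,a)+p\cdot f(t,x,a)]$, assumed to be the unique minimizer. Assumptions: (A1) $c,f,q$ are uniformly bounded and Lipschitz continuous in all their variables; (A2) $\alpha(\cdot,\cdot,\cdot)$ and a given continuous initial policy $\alpha_0:\mathbb{R}\times\mathbb{R}^d\to A$ are uniformly Lipschitz continuous in all their variables. $\|f\|_\infty=\sup|f|$. For $\varphi:\mathbb{R}^d\to\mathbb{R}$, $h\in(0,1)$: $\nabla^h\varphi(x)=\big(\frac{\varphi(x+he_i)-\varphi(x-he_i)}{2h}\big)_{i=1}^d$, $\Delta^h\varphi(x)=\sum_{i=1}^d\frac{\varphi(x+he_i)-2\varphi(x)+\varphi(x-he_i)}{h^2}$ (acting in $x$). Semi-discrete policy iteration: for $n=0,1,\dots$, $v_n^h$ solves $\partial_t v_n^h+c(t,x,\alpha_n(t,x))+\nabla^h v_n^h\cdot f(t,x,\alpha_n(t,x))=-Nh\Delta^h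 v_n^h$ in $(0,T)\times\mathbb{R}^d$, $v_n^h(T,x)=q(x)$ on $\mathbb{R}^d$, and then $\alpha_{n+1}(t,x)=\alpha(t,x,\nabla^h v_n^h(t,x))$ in $(0,T)\times\mathbb{R}^d$. *)

From mathcomp Require Import all_boot all_order all_algebra.
From mathcomp Require Import all_classical all_reals all_analysis.
Set Implicit Arguments. Unset Strict Implicit. Unset Printing Implicit Defensive.
Import Order.TTheory GRing.Theory Num.Theory.
Import numFieldNormedType.Exports.
Local Open Scope ring_scope.

Section Defs.
Context {R : realType}.

Definition ev {d : nat} (i : 'I_d) : 'rV[R]_d := delta_mx 0 i.

Definition dotv {d : nat} (p q : 'rV[R]_d) : R := \sum_(i < d) p 0 i * q 0 i.
Definition eucl {d : nat} (p : 'rV[R]_d) : R := Num.sqrt (dotv p p).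

Definition dgrad {d : nat} (h : R) (phi : 'rV[R]_d -> R) (x : 'rV[R]_d) : 'rV[R]_d :=
  \row_(i < d) ((phi (x + h *: ev i) - phi (x - h *: ev i)) / (2 * h)).

Definition dlap {d : nat} (h : R) (phi : 'rV[R]_d -> R) (x : 'rV[R]_d) : R :=
  \sum_(i < d) ((phi (x + h *: ev i) - 2 * phi x + phi (x - h *: ev i)) / h ^+ 2).

Definition lip1 {U V : normedModType R} (g : U -> V) : Prop :=
  exists k : R, forall x y, `|g x - g y| <= k * `|x - y|.

Definition lip2 {U V : normedModType R} (D : R -> Prop) (g : R -> U -> V) : Prop :=
  exists k : R, forall t s x y, D t -> D s ->
    `|g t x - g s y| <= k * (`|t - s| + `|x - y|).

Definition lip3 {U W V : normedModType R} (D1 : R -> Prop) (D3 : W -> Prop)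
  (g : R -> U -> W -> V) : Prop :=
  exists k : R, forall t s x y a b, D1 t -> D1 s -> D3 a -> D3 b ->
    `|g t x a - g s y b| <= k * (`|t - s| + `|x - y| + `|a - b|).

Definition bnd3 {U W V : normedModType R} (D1 : R -> Prop) (D3 : W -> Prop)
  (g : R -> U -> W -> V) : Prop :=
  exists M : R, forall t x a, D1 t -> D3 a -> `|g t x a| <= M.

End Defs.

From mathcomp Require Import all_boot all_order all_algebra.
From mathcomp Require Import all_classical all_reals all_analysis.
From mathcomp Require Import ring lra.
Import Order.TTheory GRing.Theory Num.Theory.
Import numFieldNormedType.Exports.
Local Open Scope classical_set_scope.
Local Open Scope ring_scope.

(* For a fixed Lipschitz policy the scheme is a linear equation for v.  Because 2 N bounds
   |f|, its spatial part is [b . dgrad^h v + N h dlap^h v = P v - lam v], where P sums v over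
   the 2 d neighbours x +- h e_i with nonnegative weights of total mass lam = 2 d N / h.
   Variation of constants turns the equation into the fixed point problem v = Phi v with
   Phi v t = e^(lam t) (e^(-lam T) q + int_t^T e^(-lam s) (c + P v s) ds).  Phi contracts the
   sup norm by the factor 1 - e^(-lam T), and comparison with explicit envelopes shows that
   it preserves the functions bounded by |q| + (T - t) |c| that are Lipschitz in t and x.
   The Picard iterates therefore converge to a Lipschitz solution whose bound does not
   depend on h.  The improved policy alpha (t, x, dgrad^h v) is again Lipschitz, with a
   constant of order 1 / h, so every step of the iteration is defined. *)

(** * Calculus on the time interval *)

Section real_analysis.
Context {R : realType}.
Implicit Types (T a b s t : R) (F G dF dG g : R -> R).

Definition clamp T t : R := Num.min (Num.max t 0) T.

Lemma clamp_itv {T} t : 0 <= T -> 0 <= clamp T t <= T.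
Proof. by move=> T0; rewrite /clamp le_min le_max ge_min !lexx !orbT T0. Qed.

Lemma clamp_id {T t} : 0 <= t <= T -> clamp T t = t.
Proof. by move=> /andP[t0 tT]; rewrite /clamp (max_idPl t0) (min_idPl tT). Qed.

Lemma clamp_lip T t s : `|clamp T t - clamp T s| <= `|t - s|.
Proof.
have max0 (x : R) : Num.max x 0 = x /\ 0 <= x \/ Num.max x 0 = 0 /\ x <= 0.
  have [x0|/ltW x0] := leP 0 x; first by left; split=> //; exact/max_idPl.
  by right; split=> //; exact/max_idPr.
have minT (x : R) : Num.min x T = x /\ x <= T \/ Num.min x T = T /\ T <= x.
  have [xT|/ltW xT] := leP x T; first by left; split=> //; exact/min_idPl.
  by right; split=> //; exact/min_idPr.
have ts := ler_norm (t - s); have st := ler_norm (s - t); rewrite distrC in st.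
rewrite /clamp ler_norml.
by case: (minT (Num.max t 0)) => -[-> ?]; case: (minT (Num.max s 0)) => -[-> ?];
  case: (max0 t) => -[? ?]; case: (max0 s) => -[? ?]; lra.
Qed.

Lemma lipschitz_continuous F k : 0 <= k ->
  (forall s t, `|F s - F t| <= k * `|s - t|) -> continuous F.
Proof.
move=> k0 Flip t; apply/cvgrPdist_lt => e e0; near=> s.
apply: le_lt_trans (Flip _ _) _.
have : `|t - s| < e / (k + 1).
  by near: s; apply/nbhs_ballP; exists (e / (k + 1)) => //=; rewrite divr_gt0 ?ltr_wpDl.
rewrite ltr_pdivlMr ?ltr_wpDl //; apply: le_lt_trans.
by have := normr_ge0 (t - s); nra.
Unshelve. all: by end_near.
Qed.

Lemma clamp_id_gt {T t s} : 0 <= T -> clamp T t < s < T -> clamp T s = s.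
Proof. by move=> T0 /andP[ts sT]; apply: clamp_id; have := clamp_itv t T0; lra. Qed.

Lemma continuous_clamp T : continuous (clamp T).
Proof. by apply: (@lipschitz_continuous _ 1) => // s t; rewrite mul1r clamp_lip. Qed.

Lemma near_clamp {T t} : 0 < t < T -> \forall s \near t, clamp T s = s.
Proof.
move=> /andP[t0 tT]; apply/nbhs_ballP; exists (Num.min t (T - t)) => /=.
  by rewrite lt_min t0 subr_gt0 tT.
move=> s; rewrite /ball /= lt_min !ltr_norml => /andP[/andP[? ?] /andP[? ?]].
by apply: clamp_id; apply/andP; split; lra.
Qed.

Lemma is_derive1_continuous F t (df : R) : is_derive t 1 F df -> {for t, continuous F}.
Proof. by move=> Fd; apply/differentiable_continuous/derivable1_diffP; exact: ex_derive. Qed.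

Lemma ler0_is_derive_le F dF a b : a <= b ->
  (forall s, a <= s <= b -> {for s, continuous F}) ->
  (forall s, a < s < b -> is_derive s 1 F (dF s) /\ dF s <= 0) -> F b <= F a.
Proof.
move=> ab Fc Fd; apply: (@ler0_derive1_le_cc _ F a b); rewrite ?bound_itvE //.
- by move=> s /[!in_itv] /= /Fd[Fs _]; exact: ex_derive.
- by move=> s /[!in_itv] /= /Fd[Fs]; rewrite derive1E derive_val.
- by apply: continuous_in_subspaceT => s; rewrite inE /= in_itv /= => /Fc.
Qed.

Lemma norm_sub_le_is_derive F G dF dG a b : a <= b ->
  (forall s, a <= s <= b -> {for s, continuous F} /\ {for s, continuous G}) ->
  (forall s, a < s < b ->
     [/\ is_derive s 1 F (dF s), is_derive s 1 G (dG s) & `|dF s| <= dG s]) ->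
  `|F b - F a| <= G b - G a.
Proof.
move=> ab FGc FGd.
have decr (e : R) : e = 1 \/ e = -1 -> e * F b - G b <= e * F a - G a.
  move=> e1.
  apply: (@ler0_is_derive_le (fun s => e * F s - G s) (fun s => e * dF s - dG s)) => // s.
    move=> /FGc[Fc Gc]; apply: continuousB => //.
    by apply: (@continuousM _ _ (fun=> e)) => //; exact: cst_continuous.
  move=> /FGd[Fd Gd dFG]; split; first by apply: is_derive_eq; rewrite /GRing.scale /=; ring.
  by have := ler_norm (dF s); have := ler_norm (- dF s); rewrite normrN; case: e1 => ->; lra.
rewrite ler_norml; have := decr 1 (or_introl erefl); have := decr (-1) (or_intror erefl); lra.
Qed.

(* The lower limit [-1] only has to lie strictly below the time interval [0, T]. *)
Definition primitive g t : R := parameterized_integral lebesgue_measure (-1) t g.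

Lemma is_derive_primitive g t : continuous g -> -1 < t ->
  is_derive t 1 (primitive g) (g t).
Proof.
move=> gc t1; have tt1 : t < t + 1 by lra.
have [|/derivableP gd <-] := continuous_FTC1_closed tt1 _ t1 (gc t).
  apply: continuous_compact_integrable; first exact: segment_compact.
  exact: continuous_subspaceT.
by rewrite derive1E.
Qed.

Lemma norm_le_geometric_approx {l B E th : R} {u : nat -> R} : 0 <= th < 1 ->
  (forall k, `|l - u k| <= E * th ^+ k) -> (forall k, `|u k| <= B) -> `|l| <= B.
Proof.
move=> /andP[th0 th1] lu uB; rewrite -subr_le0.
have thk : (fun k => E * th ^+ k) @ \oo --> (0 : R).
  by rewrite -(mulr0 E); apply: cvgMr; apply: cvg_expr; rewrite ger0_norm.
rewrite -(cvg_lim _ thk) //; apply: limr_ge; first exact: cvgP thk.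
apply: nearW => k; have := ler_normD (l - u k) (u k); rewrite subrK.
by have := lu k; have := uB k; lra.
Qed.

Lemma geometric_limit_dist (y : nat -> R) (C th : R) : 0 <= th < 1 -> 0 <= C ->
  (forall k, `|y k.+1 - y k| <= C * th ^+ k) ->
  forall k, `|limn y - y k| <= C / (1 - th) * th ^+ k.
Proof.
move=> /andP[th0 th1] C0 yk.
pose e k := C / (1 - th) * th ^+ k.
have eS k : e k.+1 = e k - C * th ^+ k by rewrite /e exprS; field; lra.
have e0 k : 0 <= e k by rewrite mulr_ge0 ?exprn_ge0 // divr_ge0 // subr_ge0 ltW.
(* With the tail bound [e], [y + e] decreases, [y - e] increases, and both tend to [limn y]. *)
have up_decr : nonincreasing_seq (fun k => y k + e k).
  apply/nonincreasing_seqP => k; rewrite eS.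
  by have := yk k; rewrite ler_norml => /andP[_ ?]; lra.
have lo_incr : nondecreasing_seq (fun k => y k - e k).
  apply/nondecreasing_seqP => k; rewrite eS.
  by have := yk k; rewrite ler_norml => /andP[? _]; lra.
have e_cvg : e @ \oo --> (0 : R).
  by rewrite -(mulr0 (C / (1 - th))); apply: cvgMr; apply: cvg_expr; rewrite ger0_norm.
have up_lb : has_lbound (range (fun k => y k + e k)).
  exists (y 0%N - e 0%N) => _ [k _ <-]; have := lo_incr _ _ (leq0n k).
  by have := e0 k; lra.
have up_cvg := nonincreasing_cvgn up_decr up_lb.
set l := inf _ in up_cvg.
have y_cvg : y @ \oo --> l.
  have -> : y = (fun k => y k + e k) - e by apply/funext => k /=; rewrite addrK.
  by rewrite -[l]subr0; apply: cvgB.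
have lo_cvg : (fun k => y k - e k) @ \oo --> l by rewrite -[l]subr0; apply: cvgB.
move=> k; rewrite (cvg_lim _ y_cvg) // ler_norml.
have := nonincreasing_cvgn_ge up_decr (cvgP _ up_cvg) k.
have := nondecreasing_cvgn_le lo_incr (cvgP _ lo_cvg) k.
by rewrite (cvg_lim _ up_cvg) // (cvg_lim _ lo_cvg) //= -/(e k); lra.
Qed.

(* [expR (lam * t) * (expR (- lam * T) * q0 + (J T - J t))] solves [u' = lam u - G] with
   [u T = q0]; it is compared with [Q1 + (T - t) C0 - expR (- lam (T - t)) (Q1 - Q0)], which
   solves the same equation with source [C0 + lam (Q1 + (T - t) C0)]. *)
Lemma envelope_le (lam T t Q0 Q1 C0 q0 : R) J G : t <= T -> `|q0| <= Q0 ->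
  (forall s, t <= s <= T -> {for s, continuous J}) ->
  (forall s, t < s < T -> is_derive s 1 J (expR (- lam * s) * G s)) ->
  (forall s, t < s < T -> `|G s| <= C0 + lam * (Q1 + (T - s) * C0)) ->
  `|expR (lam * t) * (expR (- lam * T) * q0 + (J T - J t))|
    <= Q1 + (T - t) * C0 - expR (- lam * (T - t)) * (Q1 - Q0).
Proof.
move=> tT q0Q Jc Jd GB.
pose H s := - expR (- lam * s) * (Q1 + (T - s) * C0).
have Hd s : is_derive s 1 H (expR (- lam * s) * (C0 + lam * (Q1 + (T - s) * C0))).
  by apply: is_derive_eq; rewrite /GRing.scale /=; ring.
have JH : `|J T - J t| <= H T - H t.
  apply: (@norm_sub_le_is_derive J H (fun s => expR (- lam * s) * G s) _ t T tT) => s sT.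
    by split; [exact: Jc | exact: is_derive1_continuous (Hd s)].
  split; [exact: Jd | exact: Hd |].
  rewrite normrM gtr0_norm ?expR_gt0 //; apply: ler_wpM2l; [exact/ltW/expR_gt0 | exact: GB].
have q0QT : `|expR (- lam * T) * q0| <= expR (- lam * T) * Q0.
  by rewrite normrM gtr0_norm ?expR_gt0 //; apply: ler_wpM2l => //; exact/ltW/expR_gt0.
rewrite normrM gtr0_norm ?expR_gt0 //.
apply: le_trans (ler_wpM2l (ltW (expR_gt0 _)) (le_trans (ler_normD _ _) (lerD q0QT JH))) _.
have -> : expR (lam * t) * (expR (- lam * T) * Q0 + (H T - H t)) =
    expR (lam * t + - lam * T) * (Q0 - Q1) + expR (lam * t + - lam * t) * (Q1 + (T - t) * C0).
  by rewrite !expRD /H; ring.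
have -> : lam * t + - lam * T = - lam * (T - t) by ring.
have -> : lam * t + - lam * t = 0 by ring.
by rewrite expR0 mul1r; lra.
Qed.

(* Variation of constants for [u' = lam u - g] on [0, T] with [u T = q0], continued
   constantly outside [0, T]. *)
Definition duhamel (lam T : R) g (q0 t : R) : R :=
  expR (lam * clamp T t) * (expR (- lam * T) * q0 +
    (primitive (fun s => expR (- lam * s) * g s) T -
     primitive (fun s => expR (- lam * s) * g s) (clamp T t))).

Lemma duhamel_T (lam T : R) g q0 : 0 <= T -> duhamel lam T g q0 T = q0.
Proof.
move=> T0; rewrite /duhamel clamp_id ?lexx ?T0 // subrr addr0 mulrA -expRD.
by rewrite mulNr addrN expR0 mul1r.
Qed.

Lemma duhamel_clamp (lam T : R) g q0 t : 0 <= T ->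
  duhamel lam T g q0 (clamp T t) = duhamel lam T g q0 t.
Proof. by move=> T0; rewrite /duhamel [clamp T (clamp T t)]clamp_id // clamp_itv. Qed.

Lemma duhamel0 (lam T t : R) : duhamel lam T (fun=> 0) 0 t = 0.
Proof.
suff P0 u : primitive (fun s => expR (- lam * s) * 0) u = 0.
  by rewrite /duhamel !P0 mulr0 subrr addr0 mulr0.
rewrite /primitive /parameterized_integral.
by under eq_Rintegral do rewrite mulr0; rewrite Rintegral_cst // mul0r.
Qed.

Lemma continuous_weighted (lam : R) g : continuous g ->
  continuous (fun s => expR (- lam * s) * g s).
Proof.
move=> gc s; apply: (@continuousM _ _ (fun s => expR (- lam * s))) => //; last exact: gc.
have ed : is_derive s 1 (fun s => expR (- lam * s)) (- lam * expR (- lam * s)).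
  by apply: is_derive_eq; rewrite /GRing.scale /=; ring.
exact: is_derive1_continuous ed.
Qed.

Lemma is_derive_duhamel (lam T : R) g q0 t : continuous g -> 0 < t < T ->
  is_derive t 1 (duhamel lam T g q0) (lam * duhamel lam T g q0 t - g t).
Proof.
move=> gc t0T; have tT : 0 <= t <= T by case/andP: t0T => *; apply/andP; split; lra.
pose G := primitive (fun s => expR (- lam * s) * g s).
have Gd : is_derive t 1 G (expR (- lam * t) * g t).
  by apply: is_derive_primitive; [exact: continuous_weighted | lra].
apply: (@near_eq_is_derive _ _ _
  (fun s => expR (lam * s) * (expR (- lam * T) * q0 + (G T - G s)))).
  by have := near_clamp t0T; apply: filterS => s sE; rewrite /duhamel sE.
apply: is_derive_eq; rewrite /duhamel (clamp_id tT) -/G /GRing.scale /= !mulNr !expRN.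
by field; rewrite !gt_eqF ?expR_gt0.
Qed.

Lemma continuous_duhamel (lam T : R) g q0 : 0 <= T -> continuous g ->
  continuous (duhamel lam T g q0).
Proof.
move=> T0 gc t; pose G := primitive (fun s => expR (- lam * s) * g s).
pose F s := expR (lam * s) * (expR (- lam * T) * q0 + (G T - G s)).
apply: (@continuous_comp _ _ _ (clamp T) F); first exact: continuous_clamp.
have /andP[c0 _] := clamp_itv t T0.
have Gd : is_derive (clamp T t) 1 G (expR (- lam * clamp T t) * g (clamp T t)).
  by apply: is_derive_primitive; [exact: continuous_weighted | lra].
by apply: is_derive1_continuous; apply: is_derive_eq.
Qed.

Lemma duhamel_sub_le (lam T t Q0 Q1 C0 : R) g1 g2 (q1 q2 : R) : 0 <= T ->
  continuous g1 -> continuous g2 -> `|q1 - q2| <= Q0 ->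
  (forall s, clamp T t < s < T -> `|g1 s - g2 s| <= C0 + lam * (Q1 + (T - s) * C0)) ->
  `|duhamel lam T g1 q1 t - duhamel lam T g2 q2 t|
    <= Q1 + (T - clamp T t) * C0 - expR (- lam * (T - clamp T t)) * (Q1 - Q0).
Proof.
move=> T0 g1c g2c qQ gB; have /andP[c0 cT] := clamp_itv t T0.
pose G g := primitive (fun s => expR (- lam * s) * g s).
have Gd g s : continuous g -> 0 <= s -> is_derive s 1 (G g) (expR (- lam * s) * g s).
  by move=> gc s0; apply: is_derive_primitive; [exact: continuous_weighted | lra].
have -> : duhamel lam T g1 q1 t - duhamel lam T g2 q2 t =
    expR (lam * clamp T t) * (expR (- lam * T) * (q1 - q2) +
      ((G g1 T - G g2 T) - (G g1 (clamp T t) - G g2 (clamp T t)))).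
  by rewrite /duhamel /G; ring.
have Jd s : clamp T t <= s -> is_derive s 1 (fun s => G g1 s - G g2 s)
    (expR (- lam * s) * (g1 s - g2 s)).
  move=> cs; have s0 : 0 <= s by lra.
  have := Gd _ _ g1c s0; have := Gd _ _ g2c s0 => G2d G1d.
  by apply: is_derive_eq; rewrite mulrBr.
apply: (@envelope_le _ _ _ _ _ _ _ (fun s => G g1 s - G g2 s) (fun s => g1 s - g2 s)) => //
  s /andP[cs _]; [exact: is_derive1_continuous (Jd s cs) | exact: Jd s (ltW cs)].
Qed.

End real_analysis.

(** * The linear scheme of a fixed policy *)

Section linear_scheme.
Context {R : realType} {d : nat}.
Variables (T N h Q Lq Ma La Lb : R).
Variables (a : R -> 'rV[R]_d -> R) (b : R -> 'rV[R]_d -> 'rV[R]_d) (q : 'rV[R]_d -> R).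
Hypotheses (T_ge0 : 0 <= T) (N_ge0 : 0 <= N) (h_gt0 : 0 < h).
Hypotheses (Lq_ge0 : 0 <= Lq) (La_ge0 : 0 <= La) (Lb_ge0 : 0 <= Lb).
Hypothesis q_bound : forall x, `|q x| <= Q.
Hypothesis q_lip : forall x y, `|q x - q y| <= Lq * `|x - y|.
Hypothesis a_bound : forall s x, `|a s x| <= Ma.
Hypothesis a_lip : forall s s' x x', `|a s x - a s' x'| <= La * (`|s - s'| + `|x - x'|).
Hypothesis b_bound : forall s x i, `|b s x 0 i| <= 2 * N.
Hypothesis b_lip : forall s s' x x' i,
  `|b s x 0 i - b s' x' 0 i| <= Lb * (`|s - s'| + `|x - x'|).

Let Q_ge0 : 0 <= Q := le_trans (normr_ge0 _) (q_bound 0).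
Let Ma_ge0 : 0 <= Ma := le_trans (normr_ge0 _) (a_bound 0 0).
Let h_ge0 : 0 <= h := ltW h_gt0.

Definition rate_up s x (i : 'I_d) := N / h + b s x 0 i / (2 * h).
Definition rate_down s x (i : 'I_d) := N / h - b s x 0 i / (2 * h).
Definition total_rate := (2 * N / h) *+ d.
Definition jump_op s x (u : 'rV[R]_d -> R) := \sum_(i < d)
  (rate_up s x i * u (x + h *: ev i) + rate_down s x i * u (x - h *: ev i)).

Lemma total_rate_mulE (D : R) : total_rate * D = \sum_(i < d) (2 * N / h * D).
Proof. by rewrite sumr_const card_ord /total_rate mulrnAl. Qed.

Lemma total_rate_ge0 : 0 <= total_rate.
Proof. by rewrite mulrn_wge0 // divr_ge0 ?mulr_ge0. Qed.

Lemma jump_opE s x u : jump_op s x u =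
  dotv (dgrad h u x) (b s x) + N * h * dlap h u x + total_rate * u x.
Proof.
rewrite /jump_op /dotv /dlap /dgrad total_rate_mulE mulr_sumr -!big_split /=.
by apply: eq_bigr => i _; rewrite mxE /rate_up /rate_down; field; rewrite gt_eqF.
Qed.

Lemma rate_up_ge0 s x i : 0 <= rate_up s x i.
Proof.
have -> : rate_up s x i = (2 * N + b s x 0 i) / (2 * h).
  by rewrite /rate_up; field; rewrite gt_eqF.
by rewrite divr_ge0 ?mulr_ge0 //; have := b_bound s x i; rewrite ler_norml; lra.
Qed.

Lemma rate_down_ge0 s x i : 0 <= rate_down s x i.
Proof.
have -> : rate_down s x i = (2 * N - b s x 0 i) / (2 * h).
  by rewrite /rate_down; field; rewrite gt_eqF.
by rewrite divr_ge0 ?mulr_ge0 //; have := b_bound s x i; rewrite ler_norml; lra.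
Qed.

Lemma rate_up_down s x i : rate_up s x i + rate_down s x i = 2 * N / h.
Proof. by rewrite /rate_up /rate_down; field; rewrite gt_eqF. Qed.

Lemma rate_up_lip s s' x y i :
  `|rate_up s x i - rate_up s' y i| <= Lb * (`|s - s'| + `|x - y|) / (2 * h).
Proof.
have -> : rate_up s x i - rate_up s' y i = (b s x 0 i - b s' y 0 i) / (2 * h).
  by rewrite /rate_up; field; rewrite gt_eqF.
by rewrite normrM [`|_^-1|]ger0_norm ?invr_ge0 ?mulr_ge0 // ler_wpM2r ?invr_ge0 ?mulr_ge0.
Qed.

Lemma rate_down_lip s s' x y i :
  `|rate_down s x i - rate_down s' y i| <= Lb * (`|s - s'| + `|x - y|) / (2 * h).
Proof.
have -> : rate_down s x i - rate_down s' y i = - (rate_up s x i - rate_up s' y i).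
  by rewrite /rate_up /rate_down; ring.
by rewrite normrN rate_up_lip.
Qed.

Lemma continuous_rates x i :
  continuous (fun s => rate_up s x i) /\ continuous (fun s => rate_down s x i).
Proof.
have L0 : 0 <= Lb / (2 * h) by rewrite divr_ge0 ?mulr_ge0.
split; apply: (@lipschitz_continuous R _ _ L0) => s s'.
  by apply: le_trans (rate_up_lip s s' x x i) _; rewrite subrr normr0 addr0 mulrAC.
by apply: le_trans (rate_down_lip s s' x x i) _; rewrite subrr normr0 addr0 mulrAC.
Qed.

Lemma jump_term_le s x i (u1 u2 D : R) : `|u1| <= D -> `|u2| <= D ->
  `|rate_up s x i * u1 + rate_down s x i * u2| <= 2 * N / h * D.
Proof.
move=> u1D u2D; rewrite -(rate_up_down s x i) [leRHS]mulrDl; apply: le_trans (ler_normD _ _) _.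
rewrite !normrM (ger0_norm (rate_up_ge0 _ _ _)) (ger0_norm (rate_down_ge0 _ _ _)).
by apply: lerD; apply: ler_wpM2l; rewrite ?rate_up_ge0 ?rate_down_ge0.
Qed.

Lemma jump_op_bound s x u D : (forall z, `|u z| <= D) -> `|jump_op s x u| <= total_rate * D.
Proof.
move=> uD; rewrite total_rate_mulE; apply: le_trans (ler_norm_sum _ _ _) _.
by apply: ler_sum => i _; apply: jump_term_le.
Qed.

Lemma jump_opB s x u u' : jump_op s x u - jump_op s x u' = jump_op s x (fun z => u z - u' z).
Proof. by rewrite /jump_op -sumrB; apply: eq_bigr => i _; ring. Qed.

Lemma jump_op_lip s x y u D M :
  (forall z, `|u (x + z) - u (y + z)| <= D) -> (forall z, `|u z| <= M) ->
  `|jump_op s x u - jump_op s y u| <= total_rate * D + (Lb * M / h) *+ d * `|x - y|.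
Proof.
move=> uD uM; rewrite /jump_op -sumrB total_rate_mulE.
have -> : (Lb * M / h) *+ d * `|x - y| = \sum_(i < d) (Lb * M / h * `|x - y|).
  by rewrite sumr_const card_ord mulrnAl.
rewrite -big_split /=; apply: le_trans (ler_norm_sum _ _ _) _.
apply: ler_sum => i _; set xp := x + h *: ev i; set xm := x - h *: ev i.
set yp := y + h *: ev i; set ym := y - h *: ev i.
have -> : rate_up s x i * u xp + rate_down s x i * u xm -
    (rate_up s y i * u yp + rate_down s y i * u ym) =
  rate_up s x i * (u xp - u yp) + rate_down s x i * (u xm - u ym) +
    ((rate_up s x i - rate_up s y i) * u yp + (rate_down s x i - rate_down s y i) * u ym).
  by ring.
apply: le_trans (ler_normD _ _) _; apply: lerD.
  by apply: jump_term_le; [have := uD (h *: ev i) | have := uD (- (h *: ev i))].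
have M0 : 0 <= M := le_trans (normr_ge0 _) (uM 0).
apply: le_trans (ler_normD _ _) _; rewrite !normrM.
have -> : Lb * M / h * `|x - y| = Lb * `|x - y| / (2 * h) * M + Lb * `|x - y| / (2 * h) * M.
  by field; rewrite gt_eqF.
have upL := rate_up_lip s s x y i; have downL := rate_down_lip s s x y i.
rewrite subrr normr0 add0r in upL downL.
by apply: lerD; apply: ler_pM; rewrite ?normr_ge0 ?uM.
Qed.

Definition source (w : R -> 'rV[R]_d -> R) s x := a s x + jump_op s x (w s).

Lemma continuous_source w x : (forall y, continuous (fun s => w s y)) ->
  continuous (fun s => source w s x).
Proof.
move=> wc s; apply: (@continuousD _ _ _ (fun s => a s x)).
  apply: (@lipschitz_continuous R _ _ La_ge0) => s1 s2.
  by have := a_lip s1 s2 x x; rewrite subrr normr0 addr0.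
apply: continuous_big => [|i _ u]; first exact: add_continuous.
have [upc downc] := continuous_rates x i.
apply: (@continuousD _ _ _ (fun s => rate_up s x i * w s (x + h *: ev i))).
  exact: continuousM (upc u) (wc _ u).
exact: continuousM (downc u) (wc _ u).
Qed.

Definition duhamel_map w t x := duhamel total_rate T (fun s => source w s x) (q x) t.

Definition sup_bound := Q + T * Ma.
(* Rate at which the Lipschitz constant in x may grow backwards in time: [La] comes from
   [a] and [(Lb * sup_bound / h) *+ d] from the jump rates ([jump_op_lip]). *)
Definition space_lip_rate := La + (Lb * sup_bound / h) *+ d.
Definition time_lip_const := total_rate * sup_bound *+ 2 + Ma.
Definition contraction_ratio := 1 - expR (- total_rate * T).

Definition envelope_bounded (w : R -> 'rV[R]_d -> R) :=
  forall s y, `|w s y| <= Q + (T - clamp T s) * Ma.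
Definition space_lip (w : R -> 'rV[R]_d -> R) :=
  forall s y z, `|w s y - w s z| <= (Lq + (T - clamp T s) * space_lip_rate) * `|y - z|.
Definition time_lip (w : R -> 'rV[R]_d -> R) :=
  forall s s' y, `|w s y - w s' y| <= time_lip_const * `|s - s'|.
Definition admissible w := [/\ envelope_bounded w, space_lip w & time_lip w].

Lemma sup_bound_ge0 : 0 <= sup_bound.
Proof. by rewrite addr_ge0 ?mulr_ge0. Qed.

Lemma space_lip_rate_ge0 : 0 <= space_lip_rate.
Proof. by rewrite addr_ge0 // mulrn_wge0 // divr_ge0 ?mulr_ge0 ?sup_bound_ge0. Qed.

Lemma time_lip_const_ge0 : 0 <= time_lip_const.
Proof. by rewrite addr_ge0 // mulrn_wge0 // mulr_ge0 ?total_rate_ge0 ?sup_bound_ge0. Qed.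

Lemma time_lip_continuous {w} : time_lip w -> forall y, continuous (fun s => w s y).
Proof.
by move=> wt y; apply: (@lipschitz_continuous R _ _ time_lip_const_ge0) => s s'; exact: wt.
Qed.

Lemma envelope_bounded_sup {w} : envelope_bounded w -> forall s y, `|w s y| <= sup_bound.
Proof.
move=> wb s y; apply: le_trans (wb s y) _; rewrite lerD2l ler_wpM2r //.
by have := clamp_itv s T_ge0; lra.
Qed.

Lemma continuous_duhamel_map w x : time_lip w -> continuous (fun t => duhamel_map w t x).
Proof.
by move=> /time_lip_continuous wc; apply: continuous_duhamel => //; exact: continuous_source.
Qed.

Lemma duhamel_map_envelope_bounded {w} : time_lip w -> envelope_bounded w ->
  envelope_bounded (duhamel_map w).
Proof.
move=> /time_lip_continuous wc wb t x.
have := @duhamel_sub_le R total_rate T t Q Q Ma (fun s => source w s x) (fun=> 0) (q x) 0 T_ge0.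
rewrite duhamel0 !subr0 subrr mulr0 subr0; apply => //.
- exact: continuous_source.
- exact: cst_continuous.
move=> s st; rewrite subr0.
apply: le_trans (ler_normD _ _) _; apply: lerD; first exact: a_bound.
by apply: jump_op_bound => z; have := wb s z; rewrite (clamp_id_gt T_ge0 st).
Qed.

Lemma duhamel_map_space_lip {w} : time_lip w -> envelope_bounded w -> space_lip w ->
  space_lip (duhamel_map w).
Proof.
move=> /time_lip_continuous wc wb wx t x y.
have := @duhamel_sub_le R total_rate T t (Lq * `|x - y|) (Lq * `|x - y|) (space_lip_rate * `|x - y|)
  (fun s => source w s x) (fun s => source w s y) (q x) (q y) T_ge0.
rewrite subrr mulr0 subr0.
move=> /(_ (continuous_source w x wc) (continuous_source w y wc) (q_lip x y)) dxy.
have -> : (Lq + (T - clamp T t) * space_lip_rate) * `|x - y| =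
  Lq * `|x - y| + (T - clamp T t) * (space_lip_rate * `|x - y|) by ring.
apply: dxy => s st; have -> : source w s x - source w s y =
    (a s x - a s y) + (jump_op s x (w s) - jump_op s y (w s)).
  by rewrite /source; ring.
apply: le_trans (ler_normD _ _) _.
have := a_lip s s x y; rewrite subrr normr0 add0r => ax.
have := @jump_op_lip s x y (w s) ((Lq + (T - s) * space_lip_rate) * `|x - y|) sup_bound.
move=> /(_ _ (envelope_bounded_sup wb s)) jx.
apply: le_trans (lerD ax (jx _)) _.
  move=> z; have := wx s (x + z) (y + z).
  by rewrite opprD addrACA subrr addr0 (clamp_id_gt T_ge0 st).
by rewrite /space_lip_rate le_eqVlt; apply/orP; left; apply/eqP; ring.
Qed.

Lemma duhamel_map_contraction {v w D} : time_lip v -> time_lip w ->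
  (forall s y, `|v s y - w s y| <= D) ->
  forall t x, `|duhamel_map v t x - duhamel_map w t x| <= contraction_ratio * D.
Proof.
move=> /time_lip_continuous vc /time_lip_continuous wc vwD t x.
have D0 : 0 <= D := le_trans (normr_ge0 _) (vwD 0 0).
have := @duhamel_sub_le R total_rate T t 0 D 0 (fun s => source v s x) (fun s => source w s x)
  (q x) (q x) T_ge0 (continuous_source v x vc) (continuous_source w x wc).
rewrite subrr normr0 subr0 mulr0 addr0 => /(_ (lexx 0)) dvw.
apply: le_trans (dvw _) _ => [s _|].
  rewrite /source opprD addrACA subrr add0r jump_opB mulr0 addr0 add0r.
  exact: jump_op_bound.
have /andP[c0 _] := clamp_itv t T_ge0.
have : expR (- total_rate * T) <= expR (- total_rate * (T - clamp T t)).
  by rewrite ler_expR !mulNr lerN2 ler_wpM2l ?total_rate_ge0 // lerBlDr lerDl.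
by move=> /(ler_wpM2r D0); rewrite /contraction_ratio mulrBl mul1r; lra.
Qed.

Lemma is_derive_duhamel_map w x t : time_lip w -> 0 < t < T ->
  is_derive t 1 (fun s => duhamel_map w s x) (total_rate * duhamel_map w t x - source w t x).
Proof.
by move=> /time_lip_continuous wc; apply: is_derive_duhamel; exact: continuous_source.
Qed.

Lemma duhamel_map_time_lip_itv {w} x s t : time_lip w -> envelope_bounded w ->
  0 <= s <= t -> t <= T ->
  `|duhamel_map w t x - duhamel_map w s x| <= time_lip_const * t - time_lip_const * s.
Proof.
move=> wt wb /andP[s0 st] tT; have Pb := envelope_bounded_sup (duhamel_map_envelope_bounded wt wb).
apply: (@norm_sub_le_is_derive R _ _ (fun u => total_rate * duhamel_map w u x - source w u x)
  (fun=> time_lip_const)) => // u /andP[su ut].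
  split; first exact: continuous_duhamel_map.
  apply: (@is_derive1_continuous R _ _ time_lip_const).
  by apply: is_derive_eq; rewrite /GRing.scale /= mulr1.
have u0T : 0 < u < T by apply/andP; split; lra.
split; [exact: is_derive_duhamel_map | by apply: is_derive_eq; rewrite /GRing.scale /= mulr1 |].
apply: le_trans (ler_normB _ _) _.
rewrite /time_lip_const mulr2n normrM ger0_norm ?total_rate_ge0 //.
have := ler_wpM2l total_rate_ge0 (Pb u x).
have := ler_normD (a u x) (jump_op u x (w u)); rewrite -/(source w u x).
have := @jump_op_bound u x (w u) _ (envelope_bounded_sup wb u); have := a_bound u x; lra.
Qed.

Lemma duhamel_map_time_lip {w} : time_lip w -> envelope_bounded w -> time_lip (duhamel_map w).
Proof.
move=> wt wb; have lip x s t : 0 <= s <= T -> 0 <= t <= T ->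
    `|duhamel_map w t x - duhamel_map w s x| <= time_lip_const * `|t - s|.
  move=> /andP[s0 sT] /andP[t0 tT]; have [st|/ltW ts] := leP s t.
    rewrite [`|t - s|]ger0_norm ?subr_ge0 // mulrBr.
    by apply: duhamel_map_time_lip_itv; rewrite ?s0.
  rewrite distrC [`|t - s|]distrC [`|s - t|]ger0_norm ?subr_ge0 // mulrBr.
  by apply: duhamel_map_time_lip_itv; rewrite ?t0.
move=> t s x; rewrite /duhamel_map -duhamel_clamp // -[duhamel _ _ _ _ s]duhamel_clamp //.
apply: le_trans (lip x _ _ (clamp_itv s T_ge0) (clamp_itv t T_ge0)) _.
by rewrite ler_wpM2l ?time_lip_const_ge0 ?clamp_lip.
Qed.

Lemma admissible0 : admissible (fun _ _ => 0).
Proof.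
split=> [s y|s y z|s s' y]; rewrite ?subrr normr0.
- by rewrite addr_ge0 ?mulr_ge0 // subr_ge0; have /andP[] := clamp_itv s T_ge0.
- rewrite mulr_ge0 // addr_ge0 ?mulr_ge0 ?space_lip_rate_ge0 // subr_ge0.
  by have /andP[] := clamp_itv s T_ge0.
- by rewrite mulr_ge0 ?time_lip_const_ge0.
Qed.

Lemma duhamel_map_admissible w : admissible w -> admissible (duhamel_map w).
Proof.
case=> wb wx wt; split; [exact: duhamel_map_envelope_bounded | exact: duhamel_map_space_lip |].
exact: duhamel_map_time_lip.
Qed.

Lemma admissible_lip {w} : admissible w -> forall t s x y,
  `|w t x - w s y| <= (time_lip_const + (Lq + T * space_lip_rate)) * (`|t - s| + `|x - y|).
Proof.
case=> _ wx wt t s x y; set L := Lq + T * space_lip_rate.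
have L0 : 0 <= L by rewrite addr_ge0 ?mulr_ge0 ?space_lip_rate_ge0.
have K : Lq + (T - clamp T s) * space_lip_rate <= L.
  rewrite lerD2l ler_wpM2r ?space_lip_rate_ge0 // lerBlDr lerDl.
  by case/andP: (clamp_itv s T_ge0).
have tri := ler_normD (w t x - w s x) (w s x - w s y); rewrite addrA subrK in tri.
have := le_trans (wx s x y) (ler_wpM2r (normr_ge0 (x - y)) K); have := wt t s x.
have := mulr_ge0 time_lip_const_ge0 (normr_ge0 (x - y)); have := mulr_ge0 L0 (normr_ge0 (t - s)).
have -> : (time_lip_const + L) * (`|t - s| + `|x - y|) =
  time_lip_const * `|t - s| + L * `|x - y| + (time_lip_const * `|x - y| + L * `|t - s|) by ring.
lra.
Qed.

Definition picard k := iter k duhamel_map (fun _ _ => 0).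

Lemma picard_admissible k : admissible (picard k).
Proof. by elim: k => [|k IH]; [exact: admissible0 | exact: duhamel_map_admissible]. Qed.

Lemma contraction_ratio_itv : 0 <= contraction_ratio < 1.
Proof.
rewrite /contraction_ratio subr_ge0 expR_le1 ltrBlDr ltrDl expR_gt0 andbT.
by rewrite mulNr oppr_le0 mulr_ge0 ?total_rate_ge0.
Qed.

Lemma picard_step k s y :
  `|picard k.+1 s y - picard k s y| <= sup_bound *+ 2 * contraction_ratio ^+ k.
Proof.
elim: k s y => [|k IH] s y.
  have [b1 _ _] := picard_admissible 1; rewrite /= subr0 expr0 mulr1 mulr2n.
  by have := envelope_bounded_sup b1 s y; have := sup_bound_ge0; lra.
have [_ _ t1] := picard_admissible k.+1; have [_ _ t0] := picard_admissible k.
by rewrite exprS mulrCA; exact: duhamel_map_contraction t1 t0 IH s y.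
Qed.

Definition scheme_solution t x := limn (fun k => picard k t x).

Let err := sup_bound *+ 2 / (1 - contraction_ratio).

Lemma scheme_solution_dist k t x :
  `|scheme_solution t x - picard k t x| <= err * contraction_ratio ^+ k.
Proof.
apply: geometric_limit_dist contraction_ratio_itv _ _ _ => [|j].
  by rewrite mulrn_wge0 ?sup_bound_ge0.
exact: picard_step.
Qed.

Lemma scheme_solution_admissible : admissible scheme_solution.
Proof.
have th01 := contraction_ratio_itv.
have dist2 k s s' y y' : `|(scheme_solution s y - scheme_solution s' y') -
    (picard k s y - picard k s' y')| <= err *+ 2 * contraction_ratio ^+ k.
  have -> : (scheme_solution s y - scheme_solution s' y') - (picard k s y - picard k s' y') =
    (scheme_solution s y - picard k s y) - (scheme_solution s' y' - picard k s' y') by ring.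
  apply: le_trans (ler_normB _ _) _; rewrite mulr2n mulrDl.
  by apply: lerD; exact: scheme_solution_dist.
split=> [s y|s y z|s s' y].
- apply: (norm_le_geometric_approx th01 (fun k => scheme_solution_dist k s y)) => k.
  by have [] := picard_admissible k.
- apply: (norm_le_geometric_approx th01 (fun k => dist2 k s s y z)) => k.
  by have [] := picard_admissible k.
- apply: (norm_le_geometric_approx th01 (fun k => dist2 k s s' y y)) => k.
  by have [] := picard_admissible k.
Qed.

Lemma scheme_solution_fixed t x : duhamel_map scheme_solution t x = scheme_solution t x.
Proof.
apply/eqP; rewrite -subr_eq0 -normr_le0.
apply: (norm_le_geometric_approx (E := err *+ 2) (u := fun=> 0) contraction_ratio_itv) => k;
  last by rewrite normr0.
have [_ _ st] := scheme_solution_admissible; have [_ _ pt] := picard_admissible k.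
have d1 := duhamel_map_contraction st pt (fun s y => scheme_solution_dist k s y) t x.
have d2 := scheme_solution_dist k.+1 t x; rewrite exprS mulrCA in d2.
have /andP[th0 th1] := contraction_ratio_itv.
have e0 : 0 <= err * contraction_ratio ^+ k.
  by rewrite mulr_ge0 ?exprn_ge0 // divr_ge0 ?mulrn_wge0 ?sup_bound_ge0 // subr_ge0 ltW.
have := ler_pM th0 e0 (ltW th1) (lexx _); rewrite mul1r => th_e.
have := ler_normB (duhamel_map scheme_solution t x - picard k.+1 t x)
  (scheme_solution t x - picard k.+1 t x).
rewrite opprB addrA subrK subr0 mulr2n mulrDl; move: d1 d2 => /=; lra.
Qed.

Theorem linear_scheme_solvable : exists v : R -> 'rV[R]_d -> R, [/\
  forall t x, 0 < t < T -> is_derive t 1 (fun s => v s x)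
    (- (a t x + dotv (dgrad h (v t) x) (b t x) + N * h * dlap h (v t) x)),
  forall x, v T x = q x,
  forall t x, `|v t x| <= Q + T * Ma &
  exists L, forall t s x y, `|v t x - v s y| <= L * (`|t - s| + `|x - y|)].
Proof.
have [sb sx st] := scheme_solution_admissible.
have fixE : duhamel_map scheme_solution = scheme_solution.
  by apply/funext => t; apply/funext => x; exact: scheme_solution_fixed.
exists scheme_solution; split.
- move=> t x t0T; have := is_derive_duhamel_map _ x _ st t0T; rewrite fixE => sd.
  by apply: is_derive_eq sd _; rewrite /source jump_opE; ring.
- by move=> x; rewrite -fixE /duhamel_map duhamel_T.
- exact: envelope_bounded_sup sb.
exists (time_lip_const + (Lq + T * space_lip_rate)); exact: admissible_lip.
Qed.

End linear_scheme.

(** * Policy iteration *)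

Section row_vectors.
Context {R : realType} {d : nat}.

Lemma mx_entry_le (M : 'rV[R]_d) i : `|M 0 i| <= `|M|.
Proof.
rewrite [`|M|]mx_normrE.
exact: (le_bigmax _ (fun ij : 'I_1 * 'I_d => `|M ij.1 ij.2|) (0, i)).
Qed.

Lemma mx_norm_le_entries (M : 'rV[R]_d) (e : R) : 0 <= e ->
  (forall i, `|M 0 i| <= e) -> `|M| <= e.
Proof.
move=> e0 Me; rewrite [`|M|]mx_normrE.
by apply: bigmax_le => // -[i j] _ /=; rewrite (ord1 i).
Qed.

Lemma eucl_entry_le (M : 'rV[R]_d) i : `|M 0 i| <= eucl M.
Proof.
have sq_ge0 j : 0 <= M 0 j * M 0 j by rewrite -expr2 sqr_ge0.
rewrite /eucl /dotv -sqrtr_sqr ler_sqrt; last exact: sumr_ge0.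
by rewrite (bigD1 i) //= expr2 lerDl; exact: sumr_ge0.
Qed.

Lemma dgrad_lip {h L : R} {v : R -> 'rV[R]_d -> R} : 0 < h -> 0 <= L ->
  (forall t s x y, `|v t x - v s y| <= L * (`|t - s| + `|x - y|)) ->
  forall t s x y, `|dgrad h (v t) x - dgrad h (v s) y| <= L / h * (`|t - s| + `|x - y|).
Proof.
move=> h0 L0 vL t s x y; apply: mx_norm_le_entries => [|i].
  by rewrite mulr_ge0 ?addr_ge0 // divr_ge0 // ltW.
rewrite !mxE -mulrBl normrM [`|_^-1|]gtr0_norm ?invr_gt0 ?mulr_gt0 //.
have shift (z : 'rV[R]_d) : `|v t (x + z) - v s (y + z)| <= L * (`|t - s| + `|x - y|).
  by apply: le_trans (vL _ _ _ _) _; rewrite opprD addrACA subrr addr0.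
have := ler_normB (v t (x + h *: ev i) - v s (y + h *: ev i))
  (v t (x - h *: ev i) - v s (y - h *: ev i)).
have -> : v t (x + h *: ev i) - v s (y + h *: ev i) - (v t (x - h *: ev i) - v s (y - h *: ev i))
  = v t (x + h *: ev i) - v t (x - h *: ev i) - (v s (y + h *: ev i) - v s (y - h *: ev i)).
  by ring.
have := shift (h *: ev i); have := shift (- (h *: ev i)).
have -> : L / h * (`|t - s| + `|x - y|) =
    (L * (`|t - s| + `|x - y|) + L * (`|t - s| + `|x - y|)) / (2 * h).
  by field; rewrite gt_eqF.
move=> ? ? ?; apply: ler_wpM2r; first by rewrite invr_ge0 mulr_ge0 // ltW.
lra.
Qed.

End row_vectors.

Lemma lip_along_policy {R : realType} {U W V : normedModType R} {T k K : R} {A : set W}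
    {g : R -> U -> W -> V} {p : R -> U -> W} : 0 <= T -> 0 <= K ->
  (forall t s x y a b, 0 <= t <= T -> 0 <= s <= T -> A a -> A b ->
     `|g t x a - g s y b| <= k * (`|t - s| + `|x - y| + `|a - b|)) ->
  (forall s x, A (p s x)) ->
  (forall s s' x x', `|p s x - p s' x'| <= K * (`|s - s'| + `|x - x'|)) ->
  forall s s' x x', `|g (clamp T s) x (p s x) - g (clamp T s') x' (p s' x')|
    <= `|k| * (1 + K) * (`|s - s'| + `|x - x'|).
Proof.
move=> T0 K0 gL pA pL s s' x x'.
have E0 : 0 <= `|clamp T s - clamp T s'| + `|x - x'| + `|p s x - p s' x'|.
  by rewrite !addr_ge0.
apply: le_trans (gL _ _ _ _ _ _ (clamp_itv _ T0) (clamp_itv _ T0) (pA s x) (pA s' x')) _.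
apply: le_trans (ler_wpM2r E0 (ler_norm k)) _; rewrite -mulrA ler_wpM2l //.
have := clamp_lip T s s'; have := pL s s' x x'; rewrite mulrDl mul1r; lra.
Qed.

Section policy_iteration.
Context {R : realType} {d m : nat}.
Variables (T N h Mc Mq kc kf kq : R) (A : set 'rV[R]_m).
Variables (c : R -> 'rV[R]_d -> 'rV[R]_m -> R) (f : R -> 'rV[R]_d -> 'rV[R]_m -> 'rV[R]_d).
Variable q : 'rV[R]_d -> R.
Hypotheses (T_ge0 : 0 <= T) (N_ge0 : 0 <= N) (h_gt0 : 0 < h).
Hypothesis c_bound : forall t x a, 0 <= t <= T -> A a -> `|c t x a| <= Mc.
Hypothesis f_bound : forall t x a, 0 <= t <= T -> A a -> eucl (f t x a) <= 2 * N.
Hypothesis q_bound : forall x, `|q x| <= Mq.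
Hypothesis c_lip : forall t s x y a b, 0 <= t <= T -> 0 <= s <= T -> A a -> A b ->
  `|c t x a - c s y b| <= kc * (`|t - s| + `|x - y| + `|a - b|).
Hypothesis f_lip : forall t s x y a b, 0 <= t <= T -> 0 <= s <= T -> A a -> A b ->
  `|f t x a - f s y b| <= kf * (`|t - s| + `|x - y| + `|a - b|).
Hypothesis q_lip : forall x y, `|q x - q y| <= kq * `|x - y|.

Definition lip_policy (p : R -> 'rV[R]_d -> 'rV[R]_m) := (forall s x, A (p s x)) /\
  exists2 K, 0 <= K & forall s s' x x', `|p s x - p s' x'| <= K * (`|s - s'| + `|x - x'|).

Definition evaluates (p : R -> 'rV[R]_d -> 'rV[R]_m) (v : R -> 'rV[R]_d -> R) := [/\
  forall t x, 0 < t < T -> is_derive t 1 (fun s => v s x)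
    (- (c t x (p t x) + dotv (dgrad h (v t) x) (f t x (p t x)) + N * h * dlap h (v t) x)),
  forall x, v T x = q x,
  forall t x, `|v t x| <= Mq + T * Mc &
  exists2 L, 0 <= L & forall t s x y, `|v t x - v s y| <= L * (`|t - s| + `|x - y|)].

(* Outside [0, T] the coefficients are evaluated at [clamp T t], so that they are defined
   and Lipschitz for all times, as [linear_scheme_solvable] requires. *)
Lemma policy_evaluation {p} : lip_policy p -> exists v, evaluates p v.
Proof.
case=> pA [K K0 pL].
have [||||||||v [vd vT vb [L vL]]] := @linear_scheme_solvable R d T N h Mq `|kq| Mc
  (`|kc| * (1 + K)) (`|kf| * (1 + K)) (fun s x => c (clamp T s) x (p s x))
  (fun s x => f (clamp T s) x (p s x)) q T_ge0 N_ge0 h_gt0 (normr_ge0 _).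
- by rewrite mulr_ge0 ?addr_ge0.
- by rewrite mulr_ge0 ?addr_ge0.
- exact: q_bound.
- by move=> x y; apply: le_trans (q_lip x y) _; rewrite ler_wpM2r ?ler_norm.
- by move=> s x; apply: c_bound (clamp_itv _ T_ge0) (pA s x).
- exact: lip_along_policy T_ge0 K0 c_lip pA pL.
- move=> s x i; apply: le_trans (eucl_entry_le _ i) _.
  by apply: f_bound (pA s x); exact: clamp_itv.
- move=> s s' x x' i; apply: le_trans _ (lip_along_policy T_ge0 K0 f_lip pA pL s s' x x').
  set fx := f (clamp T s) x (p s x); set fx' := f (clamp T s') x' (p s' x').
  by rewrite (_ : fx 0 i - fx' 0 i = (fx - fx') 0 i) ?mx_entry_le // !mxE.
exists v; split=> // [t x t0T|].
  have tT : 0 <= t <= T by case/andP: t0T => *; apply/andP; split; lra.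
  by have := vd t x t0T; rewrite (clamp_id tT).
exists `|L|; first exact: normr_ge0.
by move=> t s x y; apply: le_trans (vL t s x y) _; rewrite ler_wpM2r ?addr_ge0 ?ler_norm.
Qed.

Lemma evaluation_exists :
  exists ev, forall p, lip_policy p -> evaluates p (ev p).
Proof.
suff /choice[ev evP] p : exists v, lip_policy p -> evaluates p v by exists ev.
have [pP|] := pselect (lip_policy p); last by exists (fun _ _ => 0).
by have [v vE] := policy_evaluation pP; exists v.
Qed.

Variables (alpha : R -> 'rV[R]_d -> 'rV[R]_d -> 'rV[R]_m) (ka : R).
Hypothesis alpha_in : forall t x p, 0 <= t <= T -> A (alpha t x p).
Hypothesis alpha_lip : forall t s x y p p',
  0 <= t <= T -> 0 <= s <= T -> setT p -> setT p' ->
  `|alpha t x p - alpha s y p'| <= ka * (`|t - s| + `|x - y| + `|p - p'|).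

Definition improve (v : R -> 'rV[R]_d -> R) t x :=
  alpha (clamp T t) x (dgrad h (v (clamp T t)) x).

Lemma improve_lip_policy v L : 0 <= L ->
  (forall t s x y, `|v t x - v s y| <= L * (`|t - s| + `|x - y|)) -> lip_policy (improve v).
Proof.
move=> L0 vL; split=> [s x|]; first exact/alpha_in/clamp_itv.
exists (`|ka| * (1 + L / h)); first by rewrite mulr_ge0 ?addr_ge0 ?divr_ge0 // ltW.
apply: (lip_along_policy T_ge0 _ alpha_lip) => // [|s s' x x'].
  by rewrite divr_ge0 // ltW.
apply: le_trans (dgrad_lip h_gt0 L0 vL _ _ _ _) _.
by rewrite ler_wpM2l ?divr_ge0 ?(ltW h_gt0) // lerD2r clamp_lip.
Qed.

Variable alpha0 : R -> 'rV[R]_d -> 'rV[R]_m.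
Variable ev : (R -> 'rV[R]_d -> 'rV[R]_m) -> R -> 'rV[R]_d -> R.
Hypothesis evP : forall p, lip_policy p -> evaluates p (ev p).

Fixpoint policy n := if n is n'.+1 then improve (ev (policy n')) else alpha0.

Lemma policy_lip : lip_policy alpha0 -> forall n, lip_policy (policy n).
Proof.
move=> alpha0P; elim=> [|n IH] //=.
by have [_ _ _ [L L0 vL]] := evP _ IH; exact: improve_lip_policy L0 vL.
Qed.

End policy_iteration.

Arguments evaluation_exists {R d m T N h Mc Mq kc kf kq A c f q}.
Arguments policy_lip {R d m T N h Mc Mq A c f q} T_ge0 h_gt0 {alpha ka} alpha_in alpha_lip
  {alpha0 ev}.

Theorem proposition2p2 (R : realType) (d m : nat) (T : R)
  (A : set 'rV[R]_m)
  (c : R -> 'rV[R]_d -> 'rV[R]_m -> R)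
  (f : R -> 'rV[R]_d -> 'rV[R]_m -> 'rV[R]_d)
  (q : 'rV[R]_d -> R)
  (alpha : R -> 'rV[R]_d -> 'rV[R]_d -> 'rV[R]_m)
  (alpha0 : R -> 'rV[R]_d -> 'rV[R]_m)
  (N : R) :
  (1 <= d)%N -> (1 <= m)%N -> 1 <= T ->
  compact A ->
  (* alpha(t,x,p) is the unique minimizer over A of c(t,x,a) + p . f(t,x,a) *)
  (forall t x p, 0 <= t <= T ->
     A (alpha t x p) /\
     (forall a, A a -> a <> alpha t x p ->
        c t x (alpha t x p) + dotv p (f t x (alpha t x p))
          < c t x a + dotv p (f t x a))) ->
  (* (A1) *)
  bnd3 (fun t => 0 <= t <= T) A c ->
  bnd3 (fun t => 0 <= t <= T) A f ->
  (exists M : R, forall x, `|q x| <= M) ->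
  lip3 (fun t => 0 <= t <= T) A c ->
  lip3 (fun t => 0 <= t <= T) A f ->
  lip1 q ->
  (* (A2) *)
  lip3 (fun t => 0 <= t <= T) (fun _ => True) alpha ->
  (forall t x, A (alpha0 t x)) ->
  continuous (fun p : R * 'rV[R]_d => alpha0 p.1 p.2) ->
  lip2 (fun _ => True) alpha0 ->
  (* N >= max {1, ||f||_oo / 2} *)
  1 <= N ->
  (forall t x a, 0 <= t <= T -> A a -> eucl (f t x a) <= 2 * N) ->
  exists C : R, forall h : R, 0 < h < 1 ->
    exists (v : nat -> R -> 'rV[R]_d -> R) (pol : nat -> R -> 'rV[R]_d -> 'rV[R]_m),
      pol 0%N = alpha0 /\
      (forall n, lip2 (fun t => 0 <= t <= T) (v n)) /\
      (forall n, lip2 (fun t => 0 < t < T) (pol n)) /\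
      (forall n t x, 0 < t < T ->
         is_derive t 1 (fun s => v n s x)
           (- (c t x (pol n t x) + dotv (dgrad h (v n t) x) (f t x (pol n t x))
               + N * h * dlap h (v n t) x))) /\
      (forall n x, v n T x = q x) /\
      (forall n t x, 0 < t < T -> pol n.+1 t x = alpha t x (dgrad h (v n t) x)) /\
      (forall n t x, 0 <= t <= T -> `|v n t x| <= C).
Proof.
move=> _ _ T_ge1 _ alphaP [Mc c_bound] _ [Mq q_bound] [kc c_lip] [kf f_lip] [kq q_lip]
  [ka alpha_lip] alpha0A _ [k0 alpha0_lip] N_ge1 f_bound.
have T_ge0 : 0 <= T by lra.
have N_ge0 : 0 <= N by lra.
exists (Mq + T * Mc) => h /andP[h_gt0 _].
have [ev evP] := evaluation_exists T_ge0 N_ge0 h_gt0 c_bound f_bound q_bound c_lip f_lip q_lip.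
have alpha_in t x p : 0 <= t <= T -> A (alpha t x p) by move=> /(alphaP _ x p)[].
have alpha0P : lip_policy A alpha0.
  split=> //; exists `|k0|; first exact: normr_ge0.
  move=> s s' x x'; apply: le_trans (alpha0_lip s s' x x' I I) _.
  by rewrite ler_wpM2r ?addr_ge0 ?ler_norm.
have pol_lip := policy_lip T_ge0 h_gt0 alpha_in alpha_lip evP alpha0P.
have evalP n := evP _ (pol_lip n).
exists (fun n => ev (policy T h alpha alpha0 ev n)), (policy T h alpha alpha0 ev).
do ![apply: conj] => // [n|n|n t x|n x|n t x t0T|n t x _].
- by have [_ _ _ [L _ vL]] := evalP n; exists L => t s x y _ _; exact: vL.
- by have [_ [K _ pL]] := pol_lip n; exists K => t s x y _ _; exact: pL.
- by have [vd _ _ _] := evalP n; exact: vd.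
- by have [_ vT _ _] := evalP n; exact: vT.
- rewrite /= /improve clamp_id //.
  by case/andP: t0T => *; apply/andP; split; lra.
- by have [_ _ vb _] := evalP n; exact: vb.
Qed.
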